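(* Let $k\geq 1$ and $\Sigma=\{a_1,\dots,a_{k+1}\}$. Let $L\subseteq(\Sigma\times D)^*$ be the set of data words $w$ such that (i) for every $j\in\{1,\dots,k+1\}$, the data values occurring in $w$ together with attribute $a_j$ are pairwise distinct (no data value occurs twice with attribute $a_j$), and (ii) the projection of $w$ onto $\Sigma$ belongs to $a_1^*a_2^*\cdots a_{k+1}^*$. Then no SAFA $M=(Q,\Sigma\times D,q_0,F,H,\delta)$ with $|H|=k$ accepts $L$.
   Context: $D$ is a fixed countably infinite set of data values; a data word over $\Sigma$ is an element of $(\Sigma\times D)^*$, and its projection onto $\Sigma$ is the word of attributes. A set augmented finite automaton (SAFA) is a tuple $M=(Q,\Sigma\times D,q_0,F,H,\delta)$: $Q$ finite set of states, $q_0\in Q$ initial, $F\subseteq Q$ final, $H=\{h_1,\dots,h_m\}$ a finite collection of (names of) sets of data values, $\delta\subseteq Q\times\Sigma\times C\times OP\times Q$ with $C=\{p(h_i),\,!p(h_i): h_i\in H\}$, $OP=\{-\}\cup\{\mathsf{ins}(h_i):h_i\in H\}$. Configurations are $(q,\langle S_1,\dots,S_m\rangle)$ with $S_i\subseteq D$ finite; initially state $q_0$ and all sets empty. On reading $(a,d)$, a transition $(q,a,\alpha,op,q')$ from the current state may be taken if $\alpha=p(h_i)$ and $d\in S_i$, or $\alpha=\,!p(h_i)$ and $d\notin S_i$; then the state becomes $q'$ and if $op=\mathsf{ins}(h_j)$ the value $d$ is added to $S_j$ ($op=-$ changes nothing). A word is accepted if some run reads it entirely and ends in $F$. *)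

From mathcomp Require Import all_boot.
Unset Printing Implicit Defensive.

(* Data values: the fixed countably infinite set D is taken to be nat. *)
Definition data := nat.

(* Alphabet Sigma = {a_1,...,a_n} is 'I_n (a_j is the ordinal j-1).
   H = {h_1,...,h_m} is indexed by 'I_m. *)

Inductive cond (m : nat) : Type :=
  | InSet of 'I_m
  | NotInSet of 'I_m.

(* Operations OP = { - } U { ins(h_j) } : None is "-", Some j is ins(h_j). *)
Definition op (m : nat) := option 'I_m.

(* A SAFA over alphabet 'I_n x D with m sets. delta is a (finite, since all its
   components range over finite types) relation Q x Sigma x C x OP x Q. *)
Record safa (n m : nat) := Safa {
  state : finType;
  q0 : state;
  final : pred state;
  delta : state -> 'I_n -> cond m -> op m -> state -> bool
}.
Arguments state {n m}.
Arguments q0 {n m}.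
Arguments final {n m}.
Arguments delta {n m}.
Arguments InSet {m}.
Arguments NotInSet {m}.

(* Contents of the m sets: S_i is the finite set of elements of the seq. *)
Definition sets (m : nat) := 'I_m -> seq data.

Definition empty_sets {m : nat} : sets m := fun _ => [::].

Definition cond_holds {m : nat} (S : sets m) (c : cond m) (d : data) : bool :=
  match c with
  | InSet i => d \in S i
  | NotInSet i => d \notin S i
  end.

Definition apply_op {m : nat} (S : sets m) (o : op m) (d : data) : sets m :=
  match o with
  | None => S
  | Some j => fun i => if i == j then d :: S i else S i
  end.

Inductive run {n m : nat} (M : safa n m) :
  state M -> sets m -> seq ('I_n * data) -> state M -> sets m -> Prop :=
  | run_nil q S : run M q S [::] q S
  | run_cons q S a d w c o q1 q' S' :
      delta M q a c o q1 ->
      cond_holds S c d ->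
      run M q1 (apply_op S o d) w q' S' ->
      run M q S ((a, d) :: w) q' S'.


Definition accepts {n m : nat} (M : safa n m) (w : seq ('I_n * data)) : Prop :=
  exists q S, run M (q0 M) empty_sets w q S /\ final M q.

Definition inL {k : nat} (w : seq ('I_k.+1 * data)) : Prop :=
  (forall j : 'I_k.+1, uniq [seq x.2 | x <- w & x.1 == j]) /\
  (* (ii) projection onto Sigma lies in a_1^* a_2^* ... a_{k+1}^* *)
  (exists e : 'I_k.+1 -> nat,
      [seq x.1 | x <- w] = flatten [seq nseq (e j) j | j <- enum 'I_k.+1]).

(* A run of a SAFA on a data word amounts to a labelling of the positions by
   transitions, and the test made at position t depends only on which earlier positions
   carry the datum read at t and into which sets they inserted it. An accepting run
   therefore survives any change of data values that keeps every test true; if the change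
   repeats a value under one attribute, the automaton accepts a word outside L.
   The witness word has one block of k + 3 positions per attribute; each block begins and
   ends with a value occurring nowhere else, and any two blocks share one value. Copying
   the first value of block j onto its last position goes unnoticed unless the run inserts
   the first value into some set h_j and tests the last one for non-membership in h_j.
   With k + 1 blocks and k sets, h_a = h_b for two blocks a < b. Depending on the test
   made at the second occurrence (in block b) of the value shared by a and b, either
   copying the first value of block b onto it, or moving the shared value onto the end
   of block a, again goes unnoticed. *)

From mathcomp Require Import all_boot zify.

Set Implicit Arguments.
Unset Strict Implicit.

Lemma uniq_map_inj_in (T1 T2 : eqType) (f : T1 -> T2) (s : seq T1) :
  uniq (map f s) -> {in s &, injective f}.
Proof.
elim: s => //= a s IH /andP[fa us] x y; rewrite !inE.
move=> /predU1P[->|xs] /predU1P[->|ys] // fxy.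
- by rewrite fxy map_f in fa.
- by rewrite -fxy map_f in fa.
- exact: IH.
Qed.

Definition word {n : nat} (A : nat -> 'I_n) (D : nat -> data) (N : nat) :
  seq ('I_n * data) :=
  mkseq (fun t => (A t, D t)) N.

Lemma word_S {n : nat} (A : nat -> 'I_n) D N :
  word A D N.+1 = (A 0, D 0) :: word (A \o succn) (D \o succn) N.
Proof. by rewrite /word /mkseq /= -[1]addn0 iotaDl -map_comp. Qed.

Section Written.

Variable m : nat.

Definition written (D : nat -> data) (Op : nat -> op m) (t : nat) : sets m :=
  fun i => [seq D u | u <- iota 0 t & Op u == Some i].

Lemma mem_written D Op t i v :
  reflect (exists2 u, u < t & D u = v /\ Op u = Some i) (v \in written D Op t i).
Proof.
apply: (iffP mapP) => [[u] | [u ut [<- Opu]]].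
  by rewrite mem_filter mem_iota => /andP[/eqP Opu /= ut] ->; exists u.
by exists u; rewrite // mem_filter mem_iota Opu eqxx.
Qed.

Lemma written_S D Op t i :
  written D Op t.+1 i =
  (if Op 0 == Some i then [:: D 0] else [::]) ++ written (D \o succn) (Op \o succn) t i.
Proof.
by rewrite /written /= -[1]addn0 iotaDl filter_map; case: ifP => _ /=; rewrite -map_comp.
Qed.

Lemma written_eq_before D D' Op t i :
  (forall u, u < t -> D' u = D u) -> written D' Op t i = written D Op t i.
Proof.
move=> DD'; apply/eq_in_map => u.
by rewrite mem_filter mem_iota => /andP[_ /= /DD'].
Qed.

Lemma cond_holds_mem (S1 S2 : sets m) c d :
  (forall i, (d \in S1 i) = (d \in S2 i)) -> cond_holds S1 c d = cond_holds S2 c d.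
Proof. by case: c => i /= ->. Qed.

Lemma apply_op_written S0 D Op t i :
  apply_op S0 (Op 0) (D 0) i ++ written (D \o succn) (Op \o succn) t i
  =i S0 i ++ written D Op t.+1 i.
Proof.
move=> d; rewrite written_S !mem_cat; case: (Op 0) => [j|] //=.
case: (i =P j) => [->|/eqP ij] /=.
  by rewrite eqxx in_cons mem_seq1 orbA (orbC (d == D 0)).
by rewrite (inj_eq Some_inj) eq_sym (negPf ij).
Qed.

Definition guard D (C : nat -> cond m) Op t : bool :=
  cond_holds (written D Op t) (C t) (D t).

Definition guarded D C Op N := forall t, t < N -> guard D C Op t.

Lemma guard_local D D' C Op t :
  D' t = D t -> (forall u, u < t -> D' u = D t <-> D u = D t) ->
  guard D' C Op t = guard D C Op t.
Proof.
move=> Dt DD'; rewrite /guard Dt; apply: cond_holds_mem => i.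
by apply/mem_written/mem_written => -[u ut [Du Opu]]; exists u; rewrite // DD' in Du *.
Qed.

Lemma guard_update D C Op r v t :
  t != r -> (r < t -> D r <> D t /\ v <> D t) ->
  guard [eta D with r |-> v] C Op t = guard D C Op t.
Proof.
move=> tr Dr; apply: guard_local => [|u ut] /=; first by rewrite (negPf tr).
by case: (u =P r) ut => [-> ut | //]; have [? ?] := Dr ut; split.
Qed.

Lemma guard_update_at D C Op r v :
  guard [eta D with r |-> v] C Op r = cond_holds (written D Op r) (C r) v.
Proof.
rewrite /guard /= eqxx; apply: cond_holds_mem => i.
by rewrite (written_eq_before (D := D)) // => u ur /=; rewrite ltn_eqF.
Qed.

End Written.

Section Runs.

Variables (n m : nat) (M : safa n m).

Definition delta_path (A : nat -> 'I_n) N (C : nat -> cond m) (Op : nat -> op m)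
    (Q : nat -> state M) :=
  forall t, t < N -> delta M (Q t) (A t) (C t) (Op t) (Q t.+1).

(* [c0] only labels the steps of runs on the empty word: [cond 0] is empty. *)
Lemma run_labelled (c0 : cond m) N q q' (S0 : sets m) A D :
  (exists Sf, run M q S0 (word A D N) q' Sf) <->
  exists C Op Q, [/\ Q 0 = q, Q N = q', delta_path A N C Op Q &
    forall t, t < N -> cond_holds (fun i => S0 i ++ written D Op t i) (C t) (D t)].
Proof.
elim: N => [|N IH] in q q' S0 A D *.
  split=> [[Sf R] | [C [Op [Q [<- <- _ _]]]]]; last by exists S0; constructor.
  by inversion R; exists (fun=> c0), (fun=> None), (fun=> q).
rewrite word_S; split=> [[Sf R] | [C [Op [Q [Q0 QN tr ok]]]]].
  inversion R as [|? ? ? ? ? c o q1 ? ? tr0 ok0 R1]; subst.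
  have [C [Op [Q [Q0 QN tr ok]]]] := (IH _ _ _ _ _).1 (ex_intro _ _ R1).
  pose Op' t := if t is t'.+1 then Op t' else o.
  exists (fun t => if t is t'.+1 then C t' else c), Op',
         (fun t => if t is t'.+1 then Q t' else q).
  split=> // [[|t] tN | [|t] tN] /=; first by rewrite Q0.
  - exact: tr.
  - by rewrite (cond_holds_mem (S2 := S0)) // => i; rewrite cats0.
  pose S1 i := apply_op S0 o (D 0) i ++ written (D \o succn) Op t i.
  rewrite -(cond_holds_mem (S1 := S1)); first exact: ok.
  by move=> i; rewrite -(apply_op_written S0 D Op').
have [Sf R] : exists Sf, run M (Q 1) (apply_op S0 (Op 0) (D 0))
                            (word (A \o succn) (D \o succn) N) q' Sf.
  apply/IH; exists (C \o succn), (Op \o succn), (Q \o succn); split=> // t tN.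
    exact: tr.
  rewrite (cond_holds_mem (S2 := fun i => S0 i ++ written D Op t.+1 i)) ?ok //.
  by move=> i; rewrite apply_op_written.
exists Sf; apply: run_cons R; first by rewrite -Q0; apply: tr.
rewrite (cond_holds_mem (S2 := fun i => S0 i ++ written D Op 0 i)) ?ok //.
by move=> i; rewrite cats0.
Qed.

Lemma accepts_word (c0 : cond m) A D N :
  accepts M (word A D N) <->
  exists C Op Q, [/\ Q 0 = q0 M, final M (Q N), delta_path A N C Op Q & guarded D C Op N].
Proof.
split=> [[q [S0 [R fin]]] | [C [Op [Q [Q0 fin tr ok]]]]].
  have [C [Op [Q [Q0 QN tr ok]]]] := (run_labelled c0 _ _ _ _ _ _).1 (ex_intro _ S0 R).
  by exists C, Op, Q; rewrite QN.
case: (run_labelled c0 N (Q 0) (Q N) empty_sets A D).2 => [|Sf R].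
  by exists C, Op, Q.
by exists (Q N), Sf; rewrite -Q0.
Qed.

End Runs.

Definition letterwise_injective {n : nat} (A : nat -> 'I_n) (D : nat -> data) N :=
  forall t1 t2, t1 < N -> t2 < N -> A t1 = A t2 -> D t1 = D t2 -> t1 = t2.

Lemma inL_letterwise_injective {k : nat} (A : nat -> 'I_k.+1) D N :
  inL (word A D N) -> letterwise_injective A D N.
Proof.
move=> [uniqD _] t1 t2 t1N t2N At Dt; move: (uniqD (A t1)).
rewrite /word /mkseq filter_map -map_comp => /uniq_map_inj_in; apply=> //.
  by rewrite mem_filter mem_iota /= eqxx.
by rewrite mem_filter mem_iota /= At eqxx.
Qed.

Definition fresh_at (D : nat -> data) N t := forall u, u < N -> D u = D t -> u = t.

Section Replacement.

Variables (n m N : nat) (M : safa n m) (A : nat -> 'I_n).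
Variables (C : nat -> cond m) (Op : nat -> op m) (Q : nat -> state M).
Hypotheses (Q0 : Q 0 = q0 M) (QN : final M (Q N)) (tr : delta_path A N C Op Q).
Hypothesis sound : forall D, accepts M (word A D N) -> letterwise_injective A D N.

Lemma guarded_injective D : guarded D C Op N -> letterwise_injective A D N.
Proof. by move=> ok; apply/sound/(accepts_word M (C 0)); exists C, Op, Q. Qed.

Variable D : nat -> data.
Hypothesis okD : guarded D C Op N.

Lemma guard_rejects_copy i i' :
  i < i' < N -> A i = A i' ->
  (forall t, i' < t < N -> D i' <> D t /\ D i <> D t) ->
  ~~ cond_holds (written D Op i') (C i') (D i).
Proof.
move=> /andP[ii' i'N] Ai later; apply/negP => ok_i'.
have ok : guarded [eta D with i' |-> D i] C Op N.
  move=> t tN; case: (t =P i') => [-> | /eqP ti']; first by rewrite guard_update_at.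
  by rewrite guard_update ?okD // => i't; apply: later; rewrite i't.
have := guarded_injective ok (ltn_trans ii' i'N) i'N Ai.
by rewrite /= eqxx ltn_eqF // => /(_ erefl) eii'; rewrite eii' ltnn in ii'.
Qed.

Lemma guard_rejects_copy_of_shared p r p' :
  p < r < p' -> p' < N -> A p = A r -> D p = D p' ->
  (forall u, u < N -> D u = D p -> u = p \/ u = p') -> fresh_at D N r ->
  ~~ cond_holds (written D Op r) (C r) (D p).
Proof.
move=> /andP[pr rp'] p'N Apr Dpp' shared fr; apply/negP => ok_r.
have rN : r < N by lia.
have pN : p < N by lia.
have later t : r < t -> t < N -> t != p' -> D r <> D t /\ D p <> D t.
  move=> rt tN tp'; split=> Dt; first by have := fr t tN (esym Dt); lia.
  by case: (shared t tN (esym Dt)) => et; [lia | rewrite et eqxx in tp'].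
have := okD p'N; rewrite /guard; case Cp': (C p') => [x | x] /= ok_p'.
  have Opx : Op p = Some x.
    case/mem_written: ok_p' => u up' [Du Opu].
    by case: (shared u (ltn_trans up' p'N)); rewrite ?Du // => eu; [rewrite -eu | lia].
  have ok_copy : guarded [eta D with r |-> D p] C Op N.
    move=> t tN; case: (t =P r) => [-> | /eqP tr']; first by rewrite guard_update_at.
    case: (t =P p') => [-> | /eqP tp'].
      rewrite /guard Cp' /= (gtn_eqF rp'); apply/mem_written; exists p; first lia.
      by rewrite /= ltn_eqF.
    by rewrite guard_update ?okD // => rt; apply: later.
  have := guarded_injective ok_copy pN rN Apr.
  by rewrite /= eqxx ltn_eqF // => /(_ erefl) epr; rewrite epr ltnn in pr.
(* p' tests non-membership: swap, the value D r removed from r is fresh at p'. *)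
pose D' := [eta D with p' |-> D r].
have ok_swap : guarded [eta D' with r |-> D p] C Op N.
  move=> t tN; case: (t =P r) => [-> | /eqP tr'].
    rewrite guard_update_at -(cond_holds_mem (S1 := written D Op r)) // => i.
    by rewrite (written_eq_before (D := D)) // => u ur /=; rewrite ltn_eqF //; lia.
  case: (t =P p') => [-> | /eqP tp'].
    rewrite /guard Cp' /= eqxx (gtn_eqF rp').
    apply/negP => /mem_written[u up' [+ _]]; rewrite /D' /= (ltn_eqF up').
    case: (u =P r) => [_ /fr | ur /fr]; first by move/(_ pN); lia.
    by move/(_ (ltn_trans up' p'N)).
  rewrite guard_update // ?guard_update ?okD // => [p't | rt].
    by rewrite -Dpp'; have [? ?] := later t (ltn_trans rp' p't) tN tp'.
  by rewrite /= (negPf tp') if_same; apply: later.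
have := guarded_injective ok_swap pN rN Apr.
rewrite /= eqxx ltn_eqF ?(ltn_eqF (ltn_trans pr rp')) // => /(_ erefl) epr.
by rewrite epr ltnn in pr.
Qed.

Lemma fresh_pair_shared_set i i' :
  i < i' < N -> A i = A i' -> fresh_at D N i -> fresh_at D N i' ->
  exists h, Op i = Some h /\ C i' = NotInSet h.
Proof.
move=> ii'N Ai fi fi'; have /andP[ii' i'N] := ii'N.
have later t : i' < t < N -> D i' <> D t /\ D i <> D t.
  move=> /andP[i't tN]; split=> Dt.
    by have := fi' t tN (esym Dt); lia.
  by have := fi t tN (esym Dt); lia.
move: (guard_rejects_copy ii'N Ai later) (okD i'N); rewrite /guard.
case: (C i') => h /=.
  by move=> _ /mem_written[u ui' [/fi' Du _]]; have := Du (ltn_trans ui' i'N); lia.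
move/negPn/mem_written=> [u ui' [Du Opu]] _.
by exists h; rewrite -(fi u (ltn_trans ui' i'N) Du).
Qed.

Lemma shared_value_separates_sets p r e p' h :
  p < r < e -> e < p' < N -> A p = A r -> A e = A p' -> D p = D p' ->
  (forall u, u < N -> D u = D p -> u = p \/ u = p') ->
  fresh_at D N r -> fresh_at D N e -> Op e = Some h -> C r <> NotInSet h.
Proof.
move=> /andP[pr re] /andP[ep' p'N] Apr Aep' Dpp' shared fr fe Ope Cr.
have Oph : Op p = Some h.
  have prp' : p < r < p' by rewrite pr (ltn_trans re ep').
  have := guard_rejects_copy_of_shared prp' p'N Apr Dpp' shared fr.
  rewrite Cr /= negbK => /mem_written[u ur [Du Opu]].
  by case: (shared u _ Du) => [|eu|]; [lia | rewrite -eu | lia].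
have ep'N : e < p' < N by rewrite ep'.
have later t : p' < t < N -> D p' <> D t /\ D e <> D t.
  move=> /andP[p't tN]; split=> Dt; last by have := fe t tN (esym Dt); lia.
  by case: (shared t tN); [rewrite Dpp' | lia..].
move: (guard_rejects_copy ep'N Aep' later) (okD p'N); rewrite /guard.
case: (C p') => x /=.
  move=> + /mem_written[u up' [Du Opu]].
  case: (shared u (ltn_trans up' p'N)); [by rewrite Du | move=> eu | lia].
  rewrite eu Oph in Opu; case: Opu => <-.
  by move/negP; apply; apply/mem_written; exists e.
move/negPn/mem_written=> [u up' [Du Opu]] /negP; apply; apply/mem_written.
rewrite (fe u (ltn_trans up' p'N) Du) Ope in Opu.
by exists p; rewrite -?Opu; first lia.
Qed.

End Replacement.

Lemma map_divn_iota d n : 0 < d ->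
  [seq t %/ d | t <- iota 0 (n * d)] = flatten [seq nseq d j | j <- iota 0 n].
Proof.
move=> d_gt0; elim: n => [|n IH] //.
have block : [seq t %/ d | t <- iota (n * d) d] = nseq d n.
  rewrite -[X in nseq X _](size_iota (n * d)) -(size_map (fun t => t %/ d)).
  apply/all_pred1P/allP => y /mapP[t]; rewrite mem_iota => /andP[ndt tnd] ->.
  by rewrite /= -(subnKC ndt) divnMDl // divn_small ?addn0 //; lia.
by rewrite mulSnr iotaD map_cat IH block -addn1 iotaD map_cat flatten_cat /= cats0.
Qed.

Section Witness.

Variable k : nat.

Definition blen := k.+3.
Definition wlen := k.+1 * blen.

Definition wletter (t : nat) : 'I_k.+1 := inord (t %/ blen).

(* Position x of block j (attribute a_(j+1)) carries [wcode j x]: positions 0 and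
   k + 2 carry values occurring nowhere else, position i + 1 the value shared with
   position j + 1 of block i. *)
Definition wcode (j x : nat) : data :=
  pickle (if 0 < x <= k.+1 then (minn j x.-1, maxn j x.-1, 0) else (j, x, 1)).

Definition wvalue (t : nat) : data := wcode (t %/ blen) (t %% blen).

Lemma wcode_eq j x j' x' :
  wcode j x = wcode j' x' -> (j = j' /\ x = x') \/ (x = j'.+1 /\ x' = j.+1).
Proof. by move/(pcan_inj pickleK); case: ifP => c1; case: ifP => c2 [] *; lia. Qed.

Lemma wvalue_eq u j x :
  wvalue u = wcode j x -> u = j * blen + x \/ u = x.-1 * blen + j.+1 /\ 0 < x.
Proof.
by rewrite /wvalue => /wcode_eq[[<- <-] | [<- ->]]; [left | right]; rewrite -?divn_eq.
Qed.

Lemma succ_lt_blen j : j <= k -> j.+1 < blen.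
Proof. by rewrite /blen !ltnS => /leqW. Qed.

Lemma wvalue_pos j x : x < blen -> wvalue (j * blen + x) = wcode j x.
Proof.
by move=> xB; rewrite /wvalue divnMDl // modnMDl modn_small // divn_small ?addn0.
Qed.

Lemma wletter_pos j x : x < blen -> wletter (j * blen + x) = inord j.
Proof. by move=> xB; rewrite /wletter divnMDl // divn_small ?addn0. Qed.

Lemma pos_lt_block j j' x : j < j' -> x < blen -> j * blen + x < j' * blen.
Proof.
move=> jj' xB; apply: (@leq_trans (j.+1 * blen)); first by rewrite mulSnr ltn_add2l.
exact: leq_mul jj' (leqnn blen).
Qed.

Lemma pos_lt_wlen j x : j <= k -> x < blen -> j * blen + x < wlen.
Proof. by move=> jk xB; apply: pos_lt_block; rewrite ?ltnS. Qed.

Lemma divn_blen_lt u : u < wlen -> u %/ blen < k.+1.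
Proof. by rewrite ltn_divLR. Qed.

Lemma fresh_block_start j : fresh_at wvalue wlen (j * blen).
Proof.
move=> u _; rewrite -[j * blen]addn0 wvalue_pos //.
by case/wvalue_eq => [-> | []].
Qed.

Lemma fresh_block_end j : fresh_at wvalue wlen (j * blen + k.+2).
Proof.
move=> u uN; rewrite wvalue_pos // => /wvalue_eq[// | [eu _]].
by move: uN; rewrite eu /wlen /=; lia.
Qed.

Lemma wvalue_pair a b : a <= k -> b <= k ->
  wvalue (a * blen + b.+1) = wvalue (b * blen + a.+1).
Proof.
move=> ak bk.
by rewrite !wvalue_pos ?succ_lt_blen // /wcode /= !ifT ?ltnS // minnC maxnC.
Qed.

Lemma wvalue_pair_only a b u : b <= k ->
  wvalue u = wvalue (a * blen + b.+1) -> u = a * blen + b.+1 \/ u = b * blen + a.+1.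
Proof.
move=> bk; rewrite wvalue_pos ?succ_lt_blen //.
by case/wvalue_eq => [|[-> _]]; [left | right].
Qed.

Lemma witness_inL : inL (word wletter wvalue wlen).
Proof.
split=> [j | ].
  rewrite /word /mkseq filter_map -map_comp map_inj_in_uniq ?filter_uniq ?iota_uniq //.
  move=> u v; rewrite !mem_filter !mem_iota /= => /andP[/eqP lu uN] /andP[/eqP lv vN].
  have : val (wletter u) = val (wletter v) by rewrite lu lv.
  rewrite /= !inordK ?divn_blen_lt // => quv.
  rewrite /wvalue => /wcode_eq[[_ ruv] | [ru rv]].
    by rewrite (divn_eq u blen) (divn_eq v blen) quv ruv.
  by rewrite (divn_eq u blen) (divn_eq v blen) quv ru rv quv.
exists (fun=> blen); apply: (inj_map val_inj).
rewrite /word /mkseq -!map_comp map_flatten -map_comp.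
transitivity (flatten [seq nseq blen j | j <- iota 0 k.+1]).
  rewrite -map_divn_iota //; apply/eq_in_map => t; rewrite mem_iota /= => tN.
  by rewrite inordK ?divn_blen_lt.
rewrite -val_enum_ord -map_comp enumT; congr flatten; apply: eq_map => j /=.
by rewrite map_nseq.
Qed.

Section WitnessRun.

Variables (M : safa k.+1 k) (C : nat -> cond k) (Op : nat -> op k).
Variable Q : nat -> state M.
Hypotheses (Q0 : Q 0 = q0 M) (QN : final M (Q wlen)).
Hypothesis tr : delta_path wletter wlen C Op Q.
Hypothesis sound :
  forall D, accepts M (word wletter D wlen) -> letterwise_injective wletter D wlen.
Hypothesis okD : guarded wvalue C Op wlen.

Lemma block_set j : j <= k ->
  exists h, Op (j * blen) = Some h /\ C (j * blen + k.+2) = NotInSet h.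
Proof.
move=> jk; apply: (fresh_pair_shared_set Q0 QN tr sound okD).
- by rewrite -{1}[j * blen]addn0 ltn_add2l /= pos_lt_wlen.
- by rewrite wletter_pos // -[j * blen]addn0 wletter_pos.
- exact: fresh_block_start.
- exact: fresh_block_end.
Qed.

Lemma block_sets_differ a b h : a < b -> b <= k ->
  Op (b * blen) = Some h -> C (a * blen + k.+2) <> NotInSet h.
Proof.
move=> ab bk; have ak := ltnW (leq_trans ab bk).
apply: (shared_value_separates_sets Q0 QN tr sound okD
  (p := a * blen + b.+1) (r := a * blen + k.+2) (e := b * blen) (p' := b * blen + a.+1)).
- by rewrite ltn_add2l !ltnS bk pos_lt_block.
- by rewrite -{1}[b * blen]addn0 ltn_add2l /= pos_lt_wlen ?succ_lt_blen.
- by rewrite !wletter_pos // succ_lt_blen.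
- by rewrite -{1}[b * blen]addn0 !wletter_pos // succ_lt_blen.
- exact: wvalue_pair.
- by move=> u _; apply: wvalue_pair_only.
- exact: fresh_block_end.
- exact: fresh_block_start.
Qed.

End WitnessRun.

End Witness.

Theorem theorem1 (k : nat) (hk : 1 <= k) (M : safa k.+1 k) :
  ~ (forall w : seq ('I_k.+1 * data), accepts M w <-> inL w).
Proof.
move=> L_eq.
have [C [Op [Q [Q0 QN tr okD]]]] :=
  (accepts_word M (InSet (Ordinal hk)) _ _ _).1 ((L_eq _).2 (witness_inL k)).
have sound D : accepts M (word (wletter k) D (wlen k)) ->
               letterwise_injective (wletter k) D (wlen k).
  by move/L_eq/inL_letterwise_injective.
have /fin_all_exists[g gP] (j : 'I_k.+1) := block_set Q0 QN tr sound okD (ltn_ord j).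
have g_neq (a b : 'I_k.+1) : a < b -> g a <> g b.
  move=> ab gab; have [Opb _] := gP b; have [_ Cra] := gP a.
  by rewrite gab in Cra; apply: (block_sets_differ Q0 QN tr sound okD ab (ltn_ord b) Opb).
have g_inj : injective g.
  move=> a b gab; apply/val_inj; case: (ltngtP a b) => // ab.
    by case: (g_neq _ _ ab gab).
  by case: (g_neq _ _ ab (esym gab)).
by have := leq_card g g_inj; rewrite !card_ord ltnn.
Qed.
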